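(* Let $m\in\mathbb{N}$, $m\geq2$, and $T:[0,1)\to[0,1)$, $T(x)=mx\bmod1$. Let $A\subset[0,1)$ be a nowhere dense set with $T(A)\subset A$. Then for every $t\in(0,1)$ that is normal in base $m$ and every integer $i\neq0$, $$A+it\subset\mathbb{Q}^c\quad\text{and}\quad \frac{A}{it}\subset\mathbb{Q}^c.$$
   Context: An $m$-adic expansion of $t\in(0,1)$ is a sequence $(t_k)\in\{0,\dots,m-1\}^{\mathbb{N}}$ with $t=\sum_{k\ge1}t_km^{-k}$. It is normal if for every finite nonempty word $\mathbf a$ over $\{0,\dots,m-1\}$, the limiting frequency of occurrences of $\mathbf a$ as a subword of $(t_k)$ equals $m^{-|\mathbf a|}$, where $|\mathbf a|$ is the length of $\mathbf a$; $t$ is normal (in base $m$) if it has a normal $m$-adic expansion. Notation: $A+it=\{x+it:x\in A\}$, $\frac{A}{it}=\{x/(it):x\in A\setminus\{0\}\}$. $\mathbb{Q}^c$ denotes the set of irrational real numbers. *)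

From Stdlib Require Import Reals Lra Lia ZArith Arith List.
From Stdlib Require Export Rtopology.
Open Scope R_scope.

Definition Tmap (m : nat) (x : R) : R := frac_part (INR m * x).

Definition nowhere_dense (A : R -> Prop) : Prop :=
  forall x : R, ~ interior (adherence A) x.

Definition irrational (r : R) : Prop :=
  ~ exists p q : Z, q <> 0%Z /\ r = IZR p / IZR q.

(* d k is the digit t_{k+1}; the expansion is t = sum_{k>=0} d k / m^(k+1). *)
Definition is_madic_expansion (m : nat) (d : nat -> nat) (t : R) : Prop :=
  (forall k, (d k < m)%nat) /\
  Un_cv (fun N => sum_f_R0 (fun k => INR (d k) / INR m ^ (S k)) N) t.

Definition occurs_at (d : nat -> nat) (a : list nat) (i : nat) : bool :=
  forallb (fun j => Nat.eqb (d (i + j)%nat) (nth j a 0%nat)) (seq 0 (length a)).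

Definition occ_count (d : nat -> nat) (a : list nat) (N : nat) : nat :=
  length (filter (occurs_at d a) (seq 0 N)).

Definition normal_seq (m : nat) (d : nat -> nat) : Prop :=
  forall a : list nat, a <> nil -> Forall (fun x => (x < m)%nat) a ->
    Un_cv (fun N => INR (occ_count d a N) / INR N) (/ INR m ^ length a).

Definition normal_in_base (m : nat) (t : R) : Prop :=
  exists d, is_madic_expansion m d t /\ normal_seq m d.

From Stdlib Require Import Reals ZArith Lra Lia List.
Open Scope R_scope.

(* Suppose [x] in [A] and [x + i t] or [x / (i t)] is rational.
   Either way, clearing denominators gives integers [u, v <> 0] and [s] with
   [v x = u t + s].  Multiplying by [m^n] and reducing mod 1 shows that, up to
   an integer, [m^(n+j) x] equals [m^j (u y + e) / v] with
   [y = frac_part (m^n t)] and a residue [0 <= e < v].  For any target interval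
   [(al, be)] we find a small window [W] such that for every residue [e] and
   every [y] in [W] some [j] puts [frac_part (m^j (u y + e) / v)] into
   [(al, be)] (an affine map of large slope covers a whole unit interval).
   Since [t] is normal, every finite digit word occurs in its expansion, so
   the orbit [frac_part (m^n t)] enters [W].  By [T]-invariance the point
   [frac_part (m^(n+j) x)] lies in [A], so [A] meets every subinterval of
   [[0,1]], contradicting nowhere density. *)

Lemma frac_part_int_add (k : Z) (f : R) : 0 <= f < 1 -> frac_part (IZR k + f) = f.
Proof.
  intros Hf. symmetry.
  exact (proj2 (Int_part_frac_part_spec (IZR k + f) k f Hf eq_refl)).
Qed.

Lemma frac_part_add_int (r : R) (k : Z) : frac_part (r + IZR k) = frac_part r.
Proof.
  replace (r + IZR k) with (IZR (Int_part r + k) + frac_part r).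
  - apply frac_part_int_add. pose proof (base_fp r). lra.
  - rewrite plus_IZR. pose proof (Rplus_Int_part_frac_part r). lra.
Qed.

(* The [n]-th iterate of [Tmap m] is [x |-> frac_part (m^n x)], so an invariant
   set in [0,1) contains all the points [frac_part (m^n x)] for [x] in it. *)
Lemma invariant_set_orbit (m : nat) (A : R -> Prop)
  (HA01 : forall x, A x -> 0 <= x < 1)
  (HAinv : forall x, A x -> A (Tmap m x)) (x : R) :
  A x -> forall n, A (frac_part (INR m ^ n * x)).
Proof.
  intros Ax n. induction n as [|n IH].
  - replace (INR m ^ 0 * x) with (IZR 0 + x) by (simpl; ring).
    rewrite frac_part_int_add; auto.
  - apply HAinv in IH. unfold Tmap, frac_part at 2 in IH.
    replace (INR m * (INR m ^ n * x - IZR (Int_part (INR m ^ n * x))))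
      with (INR m ^ S n * x + IZR (- (Z.of_nat m * Int_part (INR m ^ n * x))))
      in IH by (rewrite opp_IZR, mult_IZR, <- INR_IZR_INZ; simpl; ring).
    rewrite frac_part_add_int in IH. exact IH.
Qed.

Lemma cv_const (c : R) : Un_cv (fun _ => c) c.
Proof.
  intros eps Heps. exists O. intros n _. unfold Rdist.
  rewrite Rminus_diag, Rabs_R0. lra.
Qed.

(** Base-[m] digits *)

Section Radix.
Variable m : nat.
Hypothesis Hm : (2 <= m)%nat.

Lemma radix_gt1 : 1 < INR m.
Proof. apply (lt_INR 1 m). lia. Qed.

Lemma radix_pow_pos (n : nat) : 0 < INR m ^ n.
Proof. apply pow_lt. pose proof radix_gt1. lra. Qed.

Lemma radix_pow_unbounded (M : R) : exists L, (0 < L)%nat /\ M < INR m ^ L.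
Proof.
  assert (Hlin : forall L, INR L + 1 <= INR m ^ L).
  { induction L as [|L IH]; [simpl; lra|].
    rewrite S_INR. simpl. pose proof radix_gt1. pose proof (pos_INR L).
    assert (2 <= INR m) by (apply (le_INR 2 m); lia). nra. }
  destruct (INR_archimed 1 M) as [L HL]; [lra|].
  exists (S L). split; [lia|]. specialize (Hlin (S L)). rewrite S_INR in Hlin. lra.
Qed.

Fixpoint word_value (w : list nat) : R :=
  match w with nil => 0 | a :: w => (INR a + word_value w) / INR m end.

Lemma leading_digit_bounds (c : R) : 0 <= c < 1 ->
  (0 <= Int_part (INR m * c) < Z.of_nat m)%Z.
Proof.
  intros Hc. pose proof radix_gt1. pose proof (base_Int_part (INR m * c)) as [H1 H2].
  split.
  - assert (-1 < Int_part (INR m * c))%Z by (apply lt_IZR; simpl; nra). lia.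
  - apply lt_IZR. rewrite <- INR_IZR_INZ. nra.
Qed.

Fixpoint digits (L : nat) (c : R) : list nat :=
  match L with
  | O => nil
  | S L => Z.to_nat (Int_part (INR m * c)) :: digits L (frac_part (INR m * c))
  end.

Lemma digits_spec (L : nat) : forall c, 0 <= c < 1 ->
  Forall (fun a => (a < m)%nat) (digits L c) /\ length (digits L c) = L /\
  word_value (digits L c) <= c < word_value (digits L c) + / INR m ^ L.
Proof.
  induction L as [|L IH]; intros c Hc.
  { simpl. repeat split; auto; lra. }
  pose proof radix_gt1. pose proof (radix_pow_pos L).
  set (q := Int_part (INR m * c)). set (c' := frac_part (INR m * c)).
  destruct (IH c' ltac:(pose proof (base_fp (INR m * c)); unfold c'; lra))
    as (Hdig & Hlen & Hlo & Hhi).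
  pose proof (leading_digit_bounds c Hc) as Hq. fold q in Hq.
  assert (Hqnat : INR (Z.to_nat q) = IZR q).
  { rewrite INR_IZR_INZ, Z2Nat.id; [reflexivity|lia]. }
  assert (Hsplit : c = (IZR q + c') / INR m).
  { unfold q, c'. rewrite <- Rplus_Int_part_frac_part. field. lra. }
  cbn [digits word_value length]. fold q c'. rewrite Hqnat.
  split; [constructor; [lia|exact Hdig]|split; [congruence|]].
  rewrite Hsplit. unfold Rdiv. rewrite <- tech_pow_Rmult, Rinv_mult.
  assert (0 < / INR m) by (apply Rinv_0_lt_compat; lra).
  split; [apply Rmult_le_compat_r; lra|].
  rewrite (Rmult_comm (/ INR m) (/ INR m ^ L)), <- Rmult_plus_distr_r.
  apply Rmult_lt_compat_r; lra.
Qed.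

Section Expansion.
Variable d : nat -> nat.
Hypothesis Hd : forall k, (d k < m)%nat.

Fixpoint prefix_value (N : nat) : R :=
  match N with O => 0 | S N => prefix_value N + INR (d N) / INR m ^ S N end.

(* Appending [n] digits increases the prefix value by at most
   [m^-N - m^-(N+n)] (the value of [n] maximal digits [m-1]). *)
Lemma prefix_value_extend (N n : nat) :
  prefix_value N <= prefix_value (N + n) <= prefix_value N + / INR m ^ N - / INR m ^ (N + n).
Proof.
  induction n as [|n IH].
  { rewrite Nat.add_0_r. lra. }
  rewrite Nat.add_succ_r. cbn [prefix_value].
  pose proof radix_gt1. pose proof (radix_pow_pos (N + n)).
  assert (Hdig : 0 <= INR (d (N + n)) <= INR m - 1).
  { split; [apply pos_INR|].
    assert (INR (S (d (N + n))) <= INR m) by (apply le_INR; apply Hd).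
    rewrite S_INR in *. lra. }
  assert (Hterm : 0 <= INR (d (N + n)) / INR m ^ S (N + n)
                  <= / INR m ^ (N + n) - / INR m ^ S (N + n)).
  { rewrite <- tech_pow_Rmult.
    replace (/ INR m ^ (N + n) - / (INR m * INR m ^ (N + n)))
      with ((INR m - 1) / (INR m * INR m ^ (N + n))) by (field; lra).
    assert (0 < INR m * INR m ^ (N + n)) by nra.
    split; [apply Rmult_le_pos; [lra|left; apply Rinv_0_lt_compat; lra]|].
    unfold Rdiv. apply Rmult_le_compat_r; [left; apply Rinv_0_lt_compat|]; lra. }
  lra.
Qed.

Lemma prefix_value_scaled_integer (N : nat) : exists z, INR m ^ N * prefix_value N = IZR z.
Proof.
  induction N as [|N [z Hz]].
  { exists 0%Z. simpl. ring. }
  exists (Z.of_nat m * z + Z.of_nat (d N))%Z.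
  rewrite plus_IZR, mult_IZR, <- !INR_IZR_INZ, <- Hz.
  pose proof radix_gt1. pose proof (radix_pow_pos N). cbn [prefix_value pow]. field. lra.
Qed.

Variable t : R.
Hypothesis Ht : Un_cv (fun N => sum_f_R0 (fun k => INR (d k) / INR m ^ (S k)) N) t.

Lemma expansion_cylinder (N : nat) : prefix_value N <= t <= prefix_value N + / INR m ^ N.
Proof.
  assert (Hsum : forall K, sum_f_R0 (fun k => INR (d k) / INR m ^ (S k)) K = prefix_value (S K)).
  { induction K as [|K IH]; simpl in *; [ring|]. rewrite IH. reflexivity. }
  assert (Hcv : Un_cv (fun K => prefix_value (S (K + N))) t).
  { apply (CV_shift' (fun K => prefix_value (S K)) N t).
    intros eps Heps. destruct (Ht eps Heps) as [K HK].
    exists K. intros n Hn. rewrite <- Hsum. exact (HK n Hn). }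
  assert (Hext : forall K, prefix_value N <= prefix_value (S (K + N))
                           <= prefix_value N + / INR m ^ N).
  { intros K. pose proof (prefix_value_extend N (S K)) as Hb.
    replace (N + S K)%nat with (S (K + N)) in Hb by lia.
    pose proof (radix_pow_pos (S (K + N))).
    assert (0 < / INR m ^ S (K + N)) by (apply Rinv_0_lt_compat; lra). lra. }
  split.
  - apply Rle_cv_lim with (fun _ => prefix_value N) (fun K => prefix_value (S (K + N)));
      [intros K; apply (Hext K)|apply cv_const|exact Hcv].
  - apply Rle_cv_lim with (fun K => prefix_value (S (K + N))) (fun _ => prefix_value N + / INR m ^ N);
      [intros K; apply (Hext K)|exact Hcv|apply cv_const].
Qed.

Lemma occurs_at_cons (w : list nat) (a n : nat) :
  occurs_at d (a :: w) n = (Nat.eqb (d n) a && occurs_at d w (S n))%bool.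
Proof.
  unfold occurs_at. cbn [length seq forallb nth]. rewrite Nat.add_0_r. f_equal.
  rewrite <- seq_shift. induction (seq 0 (length w)) as [|j js IHjs]; [reflexivity|].
  cbn [map forallb nth]. rewrite IHjs, Nat.add_succ_r. reflexivity.
Qed.

Lemma occurrence_value (w : list nat) : forall n, occurs_at d w n = true ->
  INR m ^ n * (prefix_value (n + length w) - prefix_value n) = word_value w.
Proof.
  induction w as [|a w IH]; intros n Hocc.
  { simpl. rewrite Nat.add_0_r. ring. }
  rewrite occurs_at_cons in Hocc. apply andb_prop in Hocc as [Ha Hw].
  apply Nat.eqb_eq in Ha. subst a.
  cbn [length word_value]. rewrite <- (IH (S n) Hw).
  replace (n + S (length w))%nat with (S n + length w)%nat by lia.
  pose proof radix_gt1. pose proof (radix_pow_pos n).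
  cbn [prefix_value pow]. field. lra.
Qed.

Lemma normal_word_occurs : normal_seq m d -> forall w, w <> nil ->
  Forall (fun a => (a < m)%nat) w -> exists n, occurs_at d w n = true.
Proof.
  intros Hnormal w Hw Hdig.
  pose proof (radix_pow_pos (length w)) as Hpos.
  assert (Hfreq : 0 < / INR m ^ length w) by (apply Rinv_0_lt_compat; lra).
  destruct (Hnormal w Hw Hdig _ Hfreq) as [N HN].
  specialize (HN (S N) ltac:(lia)). unfold occ_count in HN.
  destruct (filter (occurs_at d w) (seq 0 (S N))) as [|n l] eqn:E.
  - exfalso. unfold Rdist in HN. cbn [length INR] in HN.
    rewrite Rdiv_0_l, Rminus_0_l, Rabs_Ropp, Rabs_right in HN; lra.
  - exists n. assert (Hin : In n (filter (occurs_at d w) (seq 0 (S N)))) by (rewrite E; left; auto).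
    apply filter_In in Hin. tauto.
Qed.

(* The orbit [frac_part (m^n t)] of a normal number visits every interval
   [[a, b]] of [[0,1)]: the digits of its midpoint occur in the expansion. *)
Lemma normal_orbit_dense : normal_seq m d -> forall a b, 0 <= a < b -> b < 1 ->
  exists n, a <= frac_part (INR m ^ n * t) <= b.
Proof.
  intros Hnormal a b Hab Hb1.
  destruct (radix_pow_unbounded (2 / (b - a))) as (L & HL0 & HL).
  pose proof radix_gt1. pose proof (radix_pow_pos L).
  assert (Hsmall : / INR m ^ L < (b - a) / 2).
  { replace ((b - a) / 2) with (/ (2 / (b - a))) by (field; lra).
    apply Rinv_lt_contravar; [|exact HL].
    apply Rmult_lt_0_compat; [apply Rdiv_lt_0_compat|]; lra. }
  set (c := (a + b) / 2).
  destruct (digits_spec L c ltac:(unfold c; lra)) as (Hdig & Hlen & Hlo & Hhi).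
  set (w := digits L c) in *.
  assert (Hw : w <> nil) by (intros E; rewrite E in Hlen; simpl in Hlen; lia).
  destruct (normal_word_occurs Hnormal w Hw Hdig) as [n Hocc].
  exists n.
  pose proof (occurrence_value w n Hocc) as Hval. rewrite Hlen in Hval.
  destruct (prefix_value_scaled_integer n) as [z Hz].
  pose proof (expansion_cylinder (n + L)) as Hcyl.
  pose proof (radix_pow_pos n).
  set (r := INR m ^ n * (t - prefix_value (n + L))).
  assert (Hr : 0 <= r <= / INR m ^ L).
  { replace (/ INR m ^ L) with (INR m ^ n * / INR m ^ (n + L))
      by (rewrite pow_add; field; lra).
    unfold r. split; [apply Rmult_le_pos|apply Rmult_le_compat_l]; lra. }
  replace (INR m ^ n * t) with (IZR z + (word_value w + r)) by (unfold r; rewrite <- Hz, <- Hval; ring).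
  rewrite frac_part_int_add; unfold c in *; lra.
Qed.

End Expansion.
End Radix.

(** Steering a point into a prescribed interval mod 1 *)

(* An increasing affine map [y |-> c y + B] that stretches [[a, b]] to length
   at least 2 sends some nondegenerate subinterval [[a', b']] into [k + (al, be)]
   for an integer [k]: aim at the midpoint of [k + (al, be)], where [k] is the
   first integer above [c a + B]. *)
Lemma affine_window_pos (c B a b al be : R) : 0 < c -> a < b -> 0 <= al < be -> be <= 1 ->
  2 <= c * (b - a) ->
  exists a' b' (k : Z), a <= a' < b' /\ b' <= b /\
    forall y, a' <= y <= b' -> IZR k + al < c * y + B < IZR k + be.
Proof.
  intros Hc Hab Hal Hbe Hlen.
  set (k := up (c * a + B)). pose proof (archimed (c * a + B)) as [Hk1 Hk2]. fold k in Hk1, Hk2.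
  set (g := (al + be) / 2). set (dl := (be - al) / 4).
  set (y0 := (IZR k + g - B) / c). set (r := dl / c).
  assert (Hy0 : c * y0 = IZR k + g - B) by (unfold y0; field; lra).
  assert (Hr : c * r = dl) by (unfold r; field; lra).
  assert (Hr0 : 0 < r) by (unfold r, dl; apply Rdiv_lt_0_compat; lra).
  exists (y0 - r), (y0 + r), k. split; [|split].
  - split; [|lra]. apply (Rmult_le_reg_l c); [lra|].
    rewrite Rmult_minus_distr_l, Hy0, Hr. unfold g, dl. lra.
  - apply (Rmult_le_reg_l c); [lra|].
    rewrite Rmult_plus_distr_l, Hy0, Hr. unfold g, dl. lra.
  - intros y [Hy1 Hy2].
    apply (Rmult_le_compat_l c) in Hy1, Hy2; [|lra|lra].
    rewrite Rmult_minus_distr_l, Hy0, Hr in Hy1.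
    rewrite Rmult_plus_distr_l, Hy0, Hr in Hy2.
    unfold g, dl in *. lra.
Qed.

(* The same for any affine map of slope [c] with [|c| (b - a) >= 2]; a
   decreasing map is reduced to an increasing one by the reflection
   [y |-> a + b - y] of [[a, b]]. *)
Lemma affine_window (c B a b al be : R) : a < b -> 0 <= al < be -> be <= 1 ->
  2 <= Rabs c * (b - a) ->
  exists a' b' (k : Z), a <= a' < b' /\ b' <= b /\
    forall y, a' <= y <= b' -> IZR k + al < c * y + B < IZR k + be.
Proof.
  intros Hab Hal Hbe Hlen.
  destruct (Rtotal_order c 0) as [Hneg|[Hzero|Hpos]].
  - rewrite Rabs_left in Hlen by lra.
    destruct (affine_window_pos (- c) (c * (a + b) + B) a b al be)
      as (a' & b' & k & [Ha' Hab'] & Hb' & Hwin); [lra|lra|lra|lra|lra|].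
    exists (a + b - b'), (a + b - a'), k. split; [lra|split; [lra|]].
    intros y Hy.
    replace (c * y + B) with (- c * (a + b - y) + (c * (a + b) + B)) by ring.
    apply Hwin. lra.
  - subst c. rewrite Rabs_R0 in Hlen. lra.
  - rewrite Rabs_right in Hlen by lra.
    exact (affine_window_pos c B a b al be Hpos Hab Hal Hbe Hlen).
Qed.

(* Each offset shrinks the window once, using [affine_window] with
   [m^j] large enough. *)
Lemma uniform_window (m : nat) (Hm : (2 <= m)%nat) (u v : Z) (Hu : u <> 0%Z) (Hv : (0 < v)%Z)
  (al be : R) (Hal : 0 <= al < be) (Hbe : be <= 1) :
  forall (es : list Z) (a b : R), a < b -> exists a' b', a <= a' < b' /\ b' <= b /\
    forall e, In e es -> forall y, a' <= y <= b' ->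
      exists j : nat, al < frac_part (INR m ^ j * (IZR u * y + IZR e) / IZR v) < be.
Proof.
  induction es as [|e es IH]; intros a b Hab.
  { exists a, b. split; [lra|split; [lra|]]. intros e []. }
  destruct (IH a b Hab) as (a1 & b1 & [Ha1 Hab1] & Hb1 & Hes).
  assert (Hv0 : 0 < IZR v) by (apply IZR_lt; exact Hv).
  assert (Hu1 : 1 <= Rabs (IZR u)) by (rewrite <- abs_IZR; apply IZR_le; lia).
  destruct (radix_pow_unbounded m Hm (2 * IZR v / (b1 - a1))) as (j & _ & Hj).
  pose proof (radix_pow_pos m Hm j) as Hmj.
  set (c := INR m ^ j * IZR u / IZR v). set (B := INR m ^ j * IZR e / IZR v).
  assert (Hlen : 2 <= Rabs c * (b1 - a1)).
  { assert (Hstretch : 2 * IZR v <= INR m ^ j * (b1 - a1)).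
    { apply (Rmult_le_reg_r (/ (b1 - a1))); [apply Rinv_0_lt_compat; lra|].
      replace (INR m ^ j * (b1 - a1) * / (b1 - a1)) with (INR m ^ j) by (field; lra).
      unfold Rdiv in Hj. lra. }
    unfold c, Rdiv. rewrite !Rabs_mult, (Rabs_right (INR m ^ j)) by lra.
    rewrite (Rabs_right (/ IZR v)) by (left; apply Rinv_0_lt_compat; lra).
    apply (Rmult_le_reg_r (IZR v)); [lra|].
    replace (INR m ^ j * Rabs (IZR u) * / IZR v * (b1 - a1) * IZR v)
      with (INR m ^ j * (b1 - a1) * Rabs (IZR u)) by (field; lra).
    nra. }
  destruct (affine_window c B a1 b1 al be Hab1 Hal Hbe Hlen)
    as (a2 & b2 & k & [Ha2 Hab2] & Hb2 & Hwin).
  exists a2, b2. split; [lra|split; [lra|]].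
  intros e' [<-|He'] y Hy.
  - exists j.
    replace (INR m ^ j * (IZR u * y + IZR e) / IZR v) with (IZR k + (c * y + B - IZR k))
      by (unfold c, B; field; lra).
    specialize (Hwin y Hy). rewrite frac_part_int_add; lra.
  - apply (Hes e' He' y). lra.
Qed.

(** A point of [A] in rational affine relation with [t] forces [A] to be dense *)

Lemma related_orbit_decomposition (m : nat) (t x : R) (u v s : Z) (Hv : (0 < v)%Z)
  (Hx : IZR v * x = IZR u * t + IZR s) (n : nat) :
  exists e : Z, (0 <= e < v)%Z /\ forall j : nat, exists K : Z,
    INR m ^ (n + j) * x = INR m ^ j * (IZR u * frac_part (INR m ^ n * t) + IZR e) / IZR v + IZR K.
Proof.
  set (N := Int_part (INR m ^ n * t)).
  assert (Hpow : forall k, IZR (Z.of_nat m ^ Z.of_nat k) = INR m ^ k)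
    by (intros k; rewrite <- pow_IZR, <- INR_IZR_INZ; reflexivity).
  set (c := (u * N + Z.of_nat m ^ Z.of_nat n * s)%Z).
  exists (c mod v)%Z. split; [apply Z.mod_pos_bound; exact Hv|].
  intros j. exists (Z.of_nat m ^ Z.of_nat j * (c / v))%Z.
  assert (Hv0 : IZR v <> 0) by (apply not_0_IZR; lia).
  assert (Hc : IZR c = IZR v * IZR (c / v) + IZR (c mod v)).
  { rewrite <- mult_IZR, <- plus_IZR, <- Z.div_mod by lia. reflexivity. }
  assert (Hc' : IZR c = IZR u * IZR N + INR m ^ n * IZR s)
    by (unfold c; rewrite plus_IZR, !mult_IZR, Hpow; reflexivity).
  assert (HN : frac_part (INR m ^ n * t) = INR m ^ n * t - IZR N) by reflexivity.
  rewrite mult_IZR, Hpow, HN, pow_add.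
  apply (Rmult_eq_reg_l (IZR v)); [|exact Hv0].
  replace (IZR v * (INR m ^ n * INR m ^ j * x)) with (INR m ^ j * (INR m ^ n * (IZR v * x)))
    by ring.
  rewrite Hx.
  replace (IZR (c / v)) with ((IZR c - IZR (c mod v)) / IZR v) by (rewrite Hc; field; exact Hv0).
  rewrite Hc'. field. exact Hv0.
Qed.

(* Choose a window of [[0,1/2]] good for all residues mod [v], let the orbit
   of the normal number [t] enter it, and follow the orbit of [x] in [A]. *)
Lemma invariant_set_meets_intervals (m : nat) (Hm : (2 <= m)%nat) (A : R -> Prop)
  (HA01 : forall x, A x -> 0 <= x < 1)
  (HAinv : forall x, A x -> A (Tmap m x)) (t : R) (Hnt : normal_in_base m t)
  (u v s : Z) (Hu : u <> 0%Z) (Hv : (0 < v)%Z) (x : R) (Ax : A x)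
  (Hx : IZR v * x = IZR u * t + IZR s) :
  forall al be, 0 <= al < be -> be <= 1 -> exists z, A z /\ al < z < be.
Proof.
  intros al be Hal Hbe.
  destruct Hnt as (d & [Hd Ht] & Hnormal).
  set (residues := map Z.of_nat (seq 0 (Z.to_nat v))).
  destruct (uniform_window m Hm u v Hu Hv al be Hal Hbe residues 0 (1/2) ltac:(lra))
    as (a' & b' & [Ha' Hab'] & Hb' & Hwin).
  destruct (normal_orbit_dense m Hm d Hd t Ht Hnormal a' b' ltac:(lra) ltac:(lra))
    as [n Hn].
  destruct (related_orbit_decomposition m t x u v s Hv Hx n) as (e & He & Hdec).
  assert (Hres : In e residues).
  { apply in_map_iff. exists (Z.to_nat e). split; [apply Z2Nat.id; lia|].
    apply in_seq. lia. }
  destruct (Hwin e Hres _ Hn) as [j Hj].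
  exists (frac_part (INR m ^ (n + j) * x)). split.
  - exact (invariant_set_orbit m A HA01 HAinv x Ax (n + j)).
  - destruct (Hdec j) as [K HK]. rewrite HK, frac_part_add_int. exact Hj.
Qed.

(* A set meeting every open subinterval of [[0,1]] has [1/2] in the interior
   of its closure, so it is not nowhere dense. *)
Lemma meets_unit_intervals_not_nowhere_dense (A : R -> Prop) :
  (forall al be, 0 <= al < be -> be <= 1 -> exists z, A z /\ al < z < be) ->
  ~ nowhere_dense A.
Proof.
  intros Hmeets Hnd. apply (Hnd (1/2)).
  assert (Hhalf : 0 < 1/2) by lra.
  exists (mkposreal _ Hhalf). intros y Hy. unfold disc in Hy. simpl in Hy.
  apply Rabs_def2 in Hy.
  intros V [del Hdel]. pose proof (cond_pos del).
  destruct (Hmeets (Rmax 0 (y - del)) (Rmin 1 (y + del))) as (z & Az & Hz).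
  { split; [apply Rmax_l|]. unfold Rmax, Rmin. destruct Rle_dec, Rle_dec; lra. }
  { apply Rmin_l. }
  exists z. split; [|exact Az]. apply Hdel. unfold disc.
  pose proof (Rmax_r 0 (y - del)). pose proof (Rmin_r 1 (y + del)).
  apply Rabs_def1; lra.
Qed.

Lemma no_affine_relation (m : nat) (Hm : (2 <= m)%nat) (A : R -> Prop)
  (HA01 : forall x, A x -> 0 <= x < 1)
  (HAnd : nowhere_dense A)
  (HAinv : forall x, A x -> A (Tmap m x)) (t : R) (Hnt : normal_in_base m t)
  (u v s : Z) (Hu : u <> 0%Z) (Hv : v <> 0%Z) (x : R) (Ax : A x) :
  IZR v * x <> IZR u * t + IZR s.
Proof.
  intros Hx. apply (meets_unit_intervals_not_nowhere_dense A); [|exact HAnd].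
  destruct (Z_lt_le_dec 0 v) as [Hpos|Hneg].
  - exact (invariant_set_meets_intervals m Hm A HA01 HAinv t Hnt u v s Hu Hpos x Ax Hx).
  - apply (invariant_set_meets_intervals m Hm A HA01 HAinv t Hnt (- u) (- v) (- s))
      with (x := x); [lia|lia|exact Ax|].
    rewrite !opp_IZR. lra.
Qed.

Theorem theorem4 (m : nat) (Hm : (2 <= m)%nat) (A : R -> Prop)
  (HA01 : forall x, A x -> 0 <= x < 1)
  (HAnd : nowhere_dense A)
  (HAinv : forall x, A x -> A (Tmap m x)) :
  forall t : R, 0 < t < 1 -> normal_in_base m t ->
  forall i : Z, i <> 0%Z ->
    (forall x, A x -> irrational (x + IZR i * t)) /\
    (forall x, A x -> x <> 0 -> irrational (x / (IZR i * t))).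
Proof.
  intros t Ht Hnt i Hi.
  assert (HiR : IZR i <> 0) by (apply not_0_IZR; exact Hi).
  split.
  - (* x + i t = p / q gives q x = - q i t + p *)
    intros x Ax [p [q [Hq Heq]]].
    assert (HqR : IZR q <> 0) by (apply not_0_IZR; exact Hq).
    apply (no_affine_relation m Hm A HA01 HAnd HAinv t Hnt (- (q * i)) q p)
      with (x := x); [lia|exact Hq|exact Ax|].
    rewrite opp_IZR, mult_IZR.
    replace x with (IZR p / IZR q - IZR i * t) by lra. field. exact HqR.
  - (* x / (i t) = p / q gives q x = p i t, with p <> 0 since x <> 0 *)
    intros x Ax Hx0 [p [q [Hq Heq]]].
    assert (HqR : IZR q <> 0) by (apply not_0_IZR; exact Hq).
    assert (Hx : x = IZR p / IZR q * (IZR i * t)) by (rewrite <- Heq; field; split; lra).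
    assert (Hp : p <> 0%Z) by (intros ->; apply Hx0; rewrite Hx; unfold Rdiv; ring).
    apply (no_affine_relation m Hm A HA01 HAnd HAinv t Hnt (p * i) q 0)
      with (x := x); [lia|exact Hq|exact Ax|].
    rewrite Hx, mult_IZR. field. exact HqR.
Qed.
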